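(* Suppose that $\psi$ is an orthonormal differentiable wavelet such that $\psi$ and $\psi'$ have a common radial decreasing $L^1$-majorant $W$ satisfying $\int_0^\infty sW(s)\,ds<\infty$. Then the family $\{K_\varepsilon\}_{\varepsilon\in\mathcal{E}}$, $K_\varepsilon(x,y)=\sum_{j,k\in\mathbb{Z}}\varepsilon_{j,k}\psi_{j,k}(x)\overline{\psi_{j,k}(y)}$, is a uniform in $\mathcal{E}$ family of standard kernels, with constants $C_1,C_2,C_3$ depending only on $W$.
   Context: A function $\psi\in L^2(\mathbb{R})$ is an orthonormal wavelet if $\psi_{j,k}(x)=2^{j/2}\psi(2^jx-k)$, $j,k\in\mathbb{Z}$, form an orthonormal basis of $L^2(\mathbb{R})$. A function $W:[0,\infty)\to(0,\infty)$ is a radial decreasing $L^1$-majorant of $g$ if $|g(x)|\le W(|x|)$ a.e., $W\in L^1([0,\infty))$, $W$ is decreasing and $W(0)<\infty$. $\mathcal{E}$ is the set of all sequences $\varepsilon=\{\varepsilon_{j,k}\}_{j,k\in\mathbb{Z}}$ with $\varepsilon_{j,k}\in\{-1,1\}$. A family $\{K_\omega\}_{\omega\in\Omega}$ of functions on $\mathbb{R}^2\setminus\{(x,x)\}$ is a uniform in $\Omega$ family of standard kernels if there exist $C_1,C_2,C_3\in(0,\infty)$ such that for all $\omega$ and all off-diagonal pairs: $|K_\omega(x,y)|\le C_1/|x-y|$; $|K_\omega(z,y)-K_\omega(x,y)|\le C_2|z-x|/|x-y|^2$ if $|z-x|\le\frac12|x-y|$; $|K_\omega(x,w)-K_\omega(x,y)|\le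 C_3|w-y|/|x-y|^2$ if $|w-y|\le\frac12|x-y|$. *)

From Stdlib Require Import Reals Lra ZArith List Classical ClassicalEpsilon.
Open Scope R_scope.

Definition Cx : Type := (R * R)%type.
Definition Cre (z : Cx) : R := fst z.
Definition Cim (z : Cx) : R := snd z.
Definition C0 : Cx := (0, 0).
Definition C1 : Cx := (1, 0).
Definition Cadd (z w : Cx) : Cx := (Cre z + Cre w, Cim z + Cim w).
Definition Csub (z w : Cx) : Cx := (Cre z - Cre w, Cim z - Cim w).
Definition Cmul (z w : Cx) : Cx :=
  (Cre z * Cre w - Cim z * Cim w, Cre z * Cim w + Cim z * Cre w).
Definition Cconj (z : Cx) : Cx := (Cre z, - Cim z).
Definition Cscale (r : R) (z : Cx) : Cx := (r * Cre z, r * Cim z).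
Definition Cnorm (z : Cx) : R := sqrt (Cre z ^ 2 + Cim z ^ 2).

Definition psi_jk (psi : R -> Cx) (j k : Z) (x : R) : Cx :=
  Cscale (sqrt (powerRZ 2 j)) (psi (powerRZ 2 j * x - IZR k)).

Definition RInt_eq (f : R -> R) (a b v : R) : Prop :=
  exists pr : Riemann_integrable f a b, RiemannInt pr = v.

Definition ImpInt_R (f : R -> R) (v : R) : Prop :=
  (forall a b, exists w, RInt_eq f a b w) /\
  (forall eps, 0 < eps -> exists M, forall a b w,
      a <= - M -> M <= b -> RInt_eq f a b w -> Rabs (w - v) < eps).

Definition ImpInt0 (f : R -> R) (v : R) : Prop :=
  (forall b, 0 <= b -> exists w, RInt_eq f 0 b w) /\
  (forall eps, 0 < eps -> exists M, forall b w,
      M <= b -> RInt_eq f 0 b w -> Rabs (w - v) < eps).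

Definition CImpInt (f : R -> Cx) (v : Cx) : Prop :=
  ImpInt_R (fun x => Cre (f x)) (Cre v) /\ ImpInt_R (fun x => Cim (f x)) (Cim v).

Definition inner_eq (f g : R -> Cx) (v : Cx) : Prop :=
  CImpInt (fun x => Cmul (f x) (Cconj (g x))) v.

Fixpoint Csum_list (a : Z * Z -> Cx) (F : list (Z * Z)) : Cx :=
  match F with nil => C0 | cons i F' => Cadd (a i) (Csum_list a F') end.
Fixpoint Rsum_list (a : Z * Z -> R) (F : list (Z * Z)) : R :=
  match F with nil => 0 | cons i F' => a i + Rsum_list a F' end.

Definition HasSumC (a : Z * Z -> Cx) (s : Cx) : Prop :=
  forall eps, 0 < eps -> exists F0 : list (Z * Z), forall F : list (Z * Z),
    NoDup F -> incl F0 F -> Cnorm (Csub (Csum_list a F) s) < eps.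
Definition HasSumR (a : Z * Z -> R) (s : R) : Prop :=
  forall eps, 0 < eps -> exists F0 : list (Z * Z), forall F : list (Z * Z),
    NoDup F -> incl F0 F -> Rabs (Rsum_list a F - s) < eps.

Definition Null (N : R -> Prop) : Prop :=
  forall eps, 0 < eps -> exists a b : nat -> R,
    (forall n, a n <= b n) /\
    (forall x, N x -> exists n, a n < x < b n) /\
    (forall n, sum_f_R0 (fun i => b i - a i) n <= eps).
Definition ae (P : R -> Prop) : Prop :=
  exists N, Null N /\ forall x, ~ N x -> P x.

Definition Ccontinuous (f : R -> Cx) : Prop :=
  continuity (fun x => Cre (f x)) /\ continuity (fun x => Cim (f x)).

(* psi_{j,k} orthonormal in L^2(R), and complete: Parseval identity holds for
   every continuous compactly supported f (a dense subspace of L^2(R)). *)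
Definition orthonormal_wavelet (psi : R -> Cx) : Prop :=
  (forall j k j' k', inner_eq (psi_jk psi j k) (psi_jk psi j' k')
       (if (Z.eqb j j' && Z.eqb k k')%bool then C1 else C0)) /\
  (forall f : R -> Cx, Ccontinuous f ->
     (exists R0, forall x, R0 < Rabs x -> f x = C0) ->
     forall c : Z -> Z -> Cx,
       (forall j k, inner_eq f (psi_jk psi j k) (c j k)) ->
       forall nf, ImpInt_R (fun x => Cnorm (f x) ^ 2) nf ->
       HasSumR (fun jk => Cnorm (c (fst jk) (snd jk)) ^ 2) nf).

Definition radial_decr_L1_majorant (W : R -> R) (g : R -> Cx) : Prop :=
  (forall s, 0 <= s -> 0 < W s) /\
  (forall s t, 0 <= s -> s <= t -> W t <= W s) /\
  (exists v, ImpInt0 W v) /\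
  ae (fun x => Cnorm (g x) <= W (Rabs x)).

Definition sign_seq (eps : Z -> Z -> R) : Prop :=
  forall j k, eps j k = 1 \/ eps j k = -1.

Definition kernel_term (psi : R -> Cx) (eps : Z -> Z -> R) (x y : R)
  (jk : Z * Z) : Cx :=
  Cscale (eps (fst jk) (snd jk))
    (Cmul (psi_jk psi (fst jk) (snd jk) x) (Cconj (psi_jk psi (fst jk) (snd jk) y))).

(* K_eps(x,y) := the sum of the series (chosen value; meaningful when it converges) *)
Definition Kern (psi : R -> Cx) (eps : Z -> Z -> R) (x y : R) : Cx :=
  epsilon (inhabits C0) (fun s => HasSumC (kernel_term psi eps x y) s).

(* Each term of the series has modulus 2^j |psi(2^j x - k)| |psi(2^j y - k)|, so all three
   estimates are proved for the series of moduli.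

   The a.e. majorants are first turned into pointwise bounds: |psi| <= W(|.|) everywhere since
   psi is continuous and null sets have no interior, and |psi w - psi u| <= 2 W(|u| - 1) |w - u|
   for |w - u| <= 1 by a mean value inequality that only needs a bound on psi' off a null set
   (an everywhere differentiable function maps null sets to null sets).

   The condition int_0^oo s W(s) ds < oo gives W(s) <= C / (1 + s^2); summing over k then bounds
   the j-th level by 2^j W at scale 2^j |x - y|.  The resulting dyadic series over j are bounded
   by C / |x - y| for the kernel, and, using the moment condition once more, by
   C |z - x| / |x - y|^2 for its increments.  The increments in the second variable reduce to
   those in the first because each term of K(x, y) is the conjugate of the term of K(y, x). *)

From Stdlib Require Import Reals ZArith Lra Lia List.
From Stdlib Require Import Classical ClassicalEpsilon FunctionalExtensionality.
From Coquelicot Require Complex.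
Open Scope R_scope.

Fixpoint lsum {A} (f : A -> R) (l : list A) : R :=
  match l with nil => 0 | x :: l' => f x + lsum f l' end.

Section ListSums.
Context {A : Type}.
Implicit Types (f g : A -> R) (l : list A).

Lemma lsum_app f l1 l2 : lsum f (l1 ++ l2) = lsum f l1 + lsum f l2.
Proof. induction l1 as [|x l1 IH]; simpl; [ring | rewrite IH; ring]. Qed.

Lemma lsum_le f g l : (forall x, In x l -> f x <= g x) -> lsum f l <= lsum g l.
Proof.
  induction l as [|x l IH]; simpl; intros Hfg; [lra|].
  assert (f x <= g x) by auto. assert (lsum f l <= lsum g l) by auto. lra.
Qed.

Lemma lsum_nonneg f l : (forall x, 0 <= f x) -> 0 <= lsum f l.
Proof. intros Hf; induction l as [|x l IH]; simpl; [lra | specialize (Hf x); lra]. Qed.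

Lemma lsum_plus f g l : lsum (fun x => f x + g x) l = lsum f l + lsum g l.
Proof. induction l as [|x l IH]; simpl; [ring | rewrite IH; ring]. Qed.

Lemma lsum_minus f g l : lsum (fun x => f x - g x) l = lsum f l - lsum g l.
Proof. induction l as [|x l IH]; simpl; [ring | rewrite IH; ring]. Qed.

Lemma lsum_scal c f l : lsum (fun x => c * f x) l = c * lsum f l.
Proof. induction l as [|x l IH]; simpl; [ring | rewrite IH; ring]. Qed.

Lemma lsum_ext f g l : (forall x, f x = g x) -> lsum f l = lsum g l.
Proof. intros Hfg; induction l as [|x l IH]; simpl; [reflexivity | now rewrite Hfg, IH]. Qed.

Lemma lsum_incl_le f l1 l2 :
  (forall x, 0 <= f x) -> NoDup l1 -> incl l1 l2 -> lsum f l1 <= lsum f l2.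
Proof.
  intros Hf Hl1; revert l2; induction Hl1 as [|x l1 Hx _ IH]; intros l2 Hincl; simpl.
  - apply lsum_nonneg; exact Hf.
  - destruct (in_split x l2) as [l3 [l4 ->]]; [apply Hincl; now left|].
    assert (Hrest : incl l1 (l3 ++ l4)).
    { intros y Hy. assert (Hy' : In y (l3 ++ x :: l4)) by (apply Hincl; now right).
      apply in_app_or in Hy' as [Hy'|[Hyx|Hy']]; apply in_or_app;
        [tauto | subst; contradiction | tauto]. }
    specialize (IH _ Hrest). rewrite lsum_app in *. simpl. lra.
Qed.

End ListSums.

Lemma lsum_prod {A B} (f : A * B -> R) l1 l2 :
  lsum f (list_prod l1 l2) = lsum (fun a => lsum (fun b => f (a, b)) l2) l1.
Proof.
  induction l1 as [|a l1 IH]; simpl; [reflexivity|].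
  rewrite lsum_app, IH. f_equal. clear IH.
  induction l2 as [|b l2 IH]; simpl; [reflexivity | now rewrite IH].
Qed.

Lemma lsum_pairs_le {A B} (decA : forall x y : A, {x = y} + {x <> y})
  (decB : forall x y : B, {x = y} + {x <> y}) (f : A * B -> R) (g : A -> R) C :
  (forall p, 0 <= f p) ->
  (forall a l, NoDup l -> lsum (fun b => f (a, b)) l <= g a) ->
  (forall l, NoDup l -> lsum g l <= C) ->
  forall F, NoDup F -> lsum f F <= C.
Proof.
  intros Hf Hrow Hcol F HF.
  set (J := nodup decA (map fst F)). set (K := nodup decB (map snd F)).
  apply Rle_trans with (lsum f (list_prod J K)).
  - apply lsum_incl_le; auto. intros [a b] Hab. apply in_prod; apply nodup_In, in_map_iff.
    + now exists (a, b).
    + now exists (a, b).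
  - rewrite lsum_prod. eapply Rle_trans; [| apply (Hcol J), NoDup_nodup].
    apply lsum_le; intros a _. apply Hrow, NoDup_nodup.
Qed.

Lemma lsum_seq (f : nat -> R) n : lsum f (seq 0 (S n)) = sum_f_R0 f n.
Proof. induction n as [|n IH]; [simpl; ring | rewrite seq_S, lsum_app, IH; simpl; ring]. Qed.

Lemma lsum_nat_le_partial_sum (f : nat -> R) L :
  (forall n, 0 <= f n) -> NoDup L -> exists K, lsum f L <= sum_f_R0 f K.
Proof.
  intros Hf HL. exists (list_max L). rewrite <- lsum_seq. apply lsum_incl_le; auto.
  intros n Hn. apply in_seq. pose proof (proj1 (list_max_le L (list_max L)) (le_n _)) as Hmax.
  rewrite Forall_forall in Hmax. specialize (Hmax n Hn). lia.
Qed.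

Lemma lsum_geometric_le (L : list nat) : NoDup L -> lsum (fun n => / 2 ^ S n) L <= 1.
Proof.
  intros HL. destruct (lsum_nat_le_partial_sum (fun n => / 2 ^ S n) L) as [K HK]; auto.
  { intros n. apply Rlt_le, Rinv_0_lt_compat, pow_lt; lra. }
  assert (Hgeom : forall m, sum_f_R0 (fun n => / 2 ^ S n) m = 1 - / 2 ^ S m).
  { induction m as [|m IH]; [simpl; field|].
    rewrite tech5, IH; simpl; field; apply pow_nonzero; lra. }
  rewrite Hgeom in HK. assert (0 < / 2 ^ S K) by (apply Rinv_0_lt_compat, pow_lt; lra). lra.
Qed.

Definition prod_eq_dec {A B} (decA : forall x y : A, {x = y} + {x <> y})
  (decB : forall x y : B, {x = y} + {x <> y}) (x y : A * B) : {x = y} + {x <> y}.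
Proof. decide equality. Defined.

(* [Cx], [Cnorm], [Cadd], [Cmul] and [Cconj] are definitionally Coquelicot's [C], [Cmod],
   [Cplus], [Cmult] and [Cconj]. *)

Ltac cx_ring :=
  repeat match goal with z : Cx |- _ => destruct z end;
  unfold Cadd, Csub, Cscale, Cmul, Cconj, C0, Cre, Cim; simpl; f_equal; ring.

Lemma Cnorm_nonneg z : 0 <= Cnorm z.
Proof. exact (Complex.Cmod_ge_0 z). Qed.

Lemma Rabs_Cre_le z : Rabs (Cre z) <= Cnorm z.
Proof. exact (Complex.re_le_Cmod z). Qed.

Lemma Rabs_Cim_le z : Rabs (Cim z) <= Cnorm z.
Proof. eapply Rle_trans; [apply Rmax_r | exact (Complex.Rmax_Cmod z)]. Qed.

Lemma Cnorm_le_Rabs_parts z : Cnorm z <= Rabs (Cre z) + Rabs (Cim z).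
Proof.
  unfold Cnorm. pose proof (Rabs_pos (Cre z)). pose proof (Rabs_pos (Cim z)).
  rewrite <- (sqrt_square (Rabs (Cre z) + Rabs (Cim z))) by lra.
  apply sqrt_le_1_alt. rewrite <- (pow2_abs (Cre z)), <- (pow2_abs (Cim z)). nra.
Qed.

Lemma Cnorm_sub_le_Rabs_parts z w :
  Cnorm (Csub z w) <= Rabs (Cre z - Cre w) + Rabs (Cim z - Cim w).
Proof. exact (Cnorm_le_Rabs_parts (Csub z w)). Qed.

Lemma Cnorm_triangle z w : Cnorm (Cadd z w) <= Cnorm z + Cnorm w.
Proof. exact (Complex.Cmod_triangle z w). Qed.

Lemma Cnorm_mul z w : Cnorm (Cmul z w) = Cnorm z * Cnorm w.
Proof. exact (Complex.Cmod_mult z w). Qed.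

Lemma Cnorm_conj z : Cnorm (Cconj z) = Cnorm z.
Proof. exact (Complex.Cmod_conj z). Qed.

Lemma Cnorm_scale r z : Cnorm (Cscale r z) = Rabs r * Cnorm z.
Proof.
  rewrite <- Complex.Cmod_R, <- Cnorm_mul. f_equal. cx_ring.
Qed.

Lemma Cnorm_sub_sym z w : Cnorm (Csub z w) = Cnorm (Csub w z).
Proof. unfold Cnorm, Csub, Cre, Cim; simpl; f_equal; ring. Qed.

Lemma Cnorm_sub_le z w : Cnorm (Csub z w) <= Cnorm z + Cnorm w.
Proof.
  replace (Csub z w) with (Cadd z (Cscale (-1) w)) by cx_ring.
  rewrite <- (Rmult_1_l (Cnorm w)), <- Rabs_R1, <- Rabs_Ropp, <- Cnorm_scale.
  apply Cnorm_triangle.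
Qed.

Lemma Rabs_Cnorm_sub_le z w : Rabs (Cnorm z - Cnorm w) <= Cnorm (Csub z w).
Proof.
  pose proof (Cnorm_triangle (Csub z w) w) as Hz. pose proof (Cnorm_triangle (Csub w z) z) as Hw.
  replace (Cadd (Csub z w) w) with z in Hz by cx_ring.
  replace (Cadd (Csub w z) z) with w in Hw by cx_ring.
  rewrite Cnorm_sub_sym in Hw. apply Rabs_le; lra.
Qed.

Lemma Rsum_list_lsum a F : Rsum_list a F = lsum a F.
Proof. induction F as [|i F IH]; simpl; [reflexivity | now rewrite IH]. Qed.

Lemma Cre_Csum_list a F : Cre (Csum_list a F) = lsum (fun i => Cre (a i)) F.
Proof. induction F as [|i F IH]; simpl; [reflexivity | now rewrite <- IH]. Qed.

Lemma Cim_Csum_list a F : Cim (Csum_list a F) = lsum (fun i => Cim (a i)) F.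
Proof. induction F as [|i F IH]; simpl; [reflexivity | now rewrite <- IH]. Qed.

Lemma Cnorm_Csum_list_le a F : Cnorm (Csum_list a F) <= lsum (fun i => Cnorm (a i)) F.
Proof.
  induction F as [|i F IH]; simpl.
  - rewrite <- Complex.Cmod_0. apply Rle_refl.
  - eapply Rle_trans; [apply Cnorm_triangle | lra].
Qed.

Lemma Csum_list_sub a b F :
  Csum_list (fun i => Csub (a i) (b i)) F = Csub (Csum_list a F) (Csum_list b F).
Proof. induction F as [|i F IH]; simpl; [| rewrite IH]; cx_ring. Qed.

(* For nonnegative terms the unconditional sum is the supremum of the finite sums. *)
Lemma HasSumR_nonneg_bounded a B :
  (forall i, 0 <= a i) -> (forall F, NoDup F -> lsum a F <= B) -> exists s, HasSumR a s.
Proof.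
  intros Ha HB.
  set (E r := exists F, NoDup F /\ r = lsum a F).
  assert (HE0 : E 0) by (exists nil; split; [constructor | reflexivity]).
  assert (HEB : bound E) by (exists B; intros r [F [HF ->]]; auto).
  destruct (completeness E HEB (ex_intro _ 0 HE0)) as [s [Hub Hlub]].
  exists s. intros e He.
  assert (HF0 : exists F0, NoDup F0 /\ s - e < lsum a F0).
  { apply NNPP; intros Hno. assert (s <= s - e); [|lra].
    apply Hlub. intros r [F [HF ->]]. apply Rnot_lt_le; intros Hlt. apply Hno; eauto. }
  destruct HF0 as [F0 [HF0 Hgt]]. exists F0. intros F HF Hincl.
  rewrite Rsum_list_lsum.
  assert (lsum a F0 <= lsum a F) by (apply lsum_incl_le; auto).
  assert (lsum a F <= s) by (apply Hub; exists F; split; auto).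
  apply Rabs_def1; lra.
Qed.

Lemma HasSumR_minus a b s t :
  HasSumR a s -> HasSumR b t -> HasSumR (fun i => a i - b i) (s - t).
Proof.
  intros Ha Hb e He.
  destruct (Ha (e / 2)) as [Fa HFa]; [lra|]. destruct (Hb (e / 2)) as [Fb HFb]; [lra|].
  exists (Fa ++ Fb). intros F HF [Hincla Hinclb]%incl_app_inv.
  specialize (HFa F HF Hincla). specialize (HFb F HF Hinclb).
  rewrite Rsum_list_lsum in *. rewrite lsum_minus.
  apply Rabs_def2 in HFa, HFb. apply Rabs_def1; lra.
Qed.

Lemma HasSumR_dominated a g B :
  (forall i, Rabs (a i) <= g i) -> (forall F, NoDup F -> lsum g F <= B) -> exists s, HasSumR a s.
Proof.
  intros Hag HB.
  assert (Hpart : forall c : Z * Z -> R, (forall i, 0 <= c i <= g i) -> exists s, HasSumR c s).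
  { intros c Hc. apply (HasSumR_nonneg_bounded c B); [apply Hc|].
    intros F HF. eapply Rle_trans; [| apply (HB F HF)]. apply lsum_le; intros i _; apply Hc. }
  destruct (Hpart (fun i => Rmax (a i) 0)) as [sp Hsp].
  { intros i. specialize (Hag i). pose proof (Rle_abs (a i)). pose proof (Rabs_pos (a i)).
    split; [apply Rmax_r | apply Rmax_lub; lra]. }
  destruct (Hpart (fun i => Rmax (- a i) 0)) as [sm Hsm].
  { intros i. specialize (Hag i). pose proof (Rle_abs (- a i)). rewrite Rabs_Ropp in *.
    pose proof (Rabs_pos (a i)). split; [apply Rmax_r | apply Rmax_lub; lra]. }
  exists (sp - sm).
  replace a with (fun i => Rmax (a i) 0 - Rmax (- a i) 0).
  - apply HasSumR_minus; assumption.
  - apply functional_extensionality; intros i.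
    destruct (Rle_dec 0 (a i));
      [rewrite Rmax_left, Rmax_right | rewrite Rmax_right, Rmax_left]; lra.
Qed.

Lemma HasSumC_of_parts a r m :
  HasSumR (fun i => Cre (a i)) r -> HasSumR (fun i => Cim (a i)) m -> HasSumC a (r, m).
Proof.
  intros Hr Hm e He.
  destruct (Hr (e / 2)) as [Fr HFr]; [lra|]. destruct (Hm (e / 2)) as [Fm HFm]; [lra|].
  exists (Fr ++ Fm). intros F HF [Hinclr Hinclm]%incl_app_inv.
  specialize (HFr F HF Hinclr). specialize (HFm F HF Hinclm).
  rewrite Rsum_list_lsum in *.
  eapply Rle_lt_trans; [apply Cnorm_sub_le_Rabs_parts|].
  rewrite Cre_Csum_list, Cim_Csum_list. simpl. lra.
Qed.

Lemma HasSumC_bounded a B :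
  (forall F, NoDup F -> lsum (fun i => Cnorm (a i)) F <= B) -> exists s, HasSumC a s.
Proof.
  intros HB.
  destruct (HasSumR_dominated (fun i => Cre (a i)) _ B (fun i => Rabs_Cre_le (a i)) HB) as [r Hr].
  destruct (HasSumR_dominated (fun i => Cim (a i)) _ B (fun i => Rabs_Cim_le (a i)) HB) as [m Hm].
  exists (r, m). now apply HasSumC_of_parts.
Qed.

Lemma HasSumC_sub a b s t :
  HasSumC a s -> HasSumC b t -> HasSumC (fun i => Csub (a i) (b i)) (Csub s t).
Proof.
  intros Ha Hb e He.
  destruct (Ha (e / 2)) as [Fa HFa]; [lra|]. destruct (Hb (e / 2)) as [Fb HFb]; [lra|].
  exists (Fa ++ Fb). intros F HF [Hincla Hinclb]%incl_app_inv.
  specialize (HFa F HF Hincla). specialize (HFb F HF Hinclb).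
  rewrite Csum_list_sub.
  replace (Csub (Csub (Csum_list a F) (Csum_list b F)) (Csub s t))
    with (Csub (Csub (Csum_list a F) s) (Csub (Csum_list b F) t)) by cx_ring.
  eapply Rle_lt_trans; [apply Cnorm_sub_le | lra].
Qed.

Lemma HasSumC_norm_le a s B :
  HasSumC a s -> (forall F, NoDup F -> lsum (fun i => Cnorm (a i)) F <= B) -> Cnorm s <= B.
Proof.
  intros Ha HB. apply Rle_plus_epsilon; intros e He.
  destruct (Ha e He) as [F0 HF0].
  set (F := nodup (prod_eq_dec Z.eq_dec Z.eq_dec) F0).
  assert (HF : NoDup F) by apply NoDup_nodup.
  specialize (HF0 F HF (fun x Hx => proj2 (nodup_In _ _ _) Hx)).
  pose proof (Rabs_Cnorm_sub_le s (Csum_list a F)) as Hs. rewrite Cnorm_sub_sym in Hs.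
  pose proof (Cnorm_Csum_list_le a F). pose proof (HB F HF).
  pose proof (Rle_abs (Cnorm s - Cnorm (Csum_list a F))). lra.
Qed.

(** * Null sets and everywhere differentiable functions *)

Definition null_indexed (I : Type) (N : R -> Prop) : Prop :=
  forall eps, 0 < eps -> exists A B : I -> R,
    (forall i, A i <= B i) /\ (forall x, N x -> exists i, A i < x < B i) /\
    (forall L, NoDup L -> lsum (fun i => B i - A i) L <= eps).

Lemma Null_null_indexed N : Null N -> null_indexed nat N.
Proof.
  intros HN e He. destruct (HN e He) as [A [B [HAB [Hcov Hsum]]]].
  exists A, B. split; [exact HAB | split; [exact Hcov|]]. intros L HL.
  destruct (lsum_nat_le_partial_sum (fun i => B i - A i) L) as [K HK]; auto.
  - intros n; specialize (HAB n); lra.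
  - eapply Rle_trans; [exact HK | apply Hsum].
Qed.

Lemma cover_length_gt {I} (A B : I -> R) (L : list I) c x :
  (forall i, A i <= B i) -> c <= x ->
  (forall y, c <= y <= x -> exists i, In i L /\ A i < y < B i) ->
  x - c < lsum (fun i => B i - A i) L.
Proof.
  intros HAB. remember (length L) as n eqn:Hn. revert L x Hn.
  induction n as [n IH] using lt_wf_ind; intros L x Hn Hcx Hcov.
  destruct (Hcov x) as [i [Hi Hix]]; [lra|].
  destruct (in_split _ _ Hi) as [L1 [L2 ->]].
  assert (Hrest : 0 <= lsum (fun j => B j - A j) (L1 ++ L2))
    by (apply lsum_nonneg; intros j; specialize (HAB j); lra).
  rewrite lsum_app in *; simpl.
  destruct (Rlt_or_le (A i) c) as [Hac|Hca]; [lra|].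
  assert (IHi : A i - c < lsum (fun j => B j - A j) (L1 ++ L2)).
  { apply (IH (length (L1 ++ L2)));
      [rewrite Hn, !length_app; simpl; lia | reflexivity | exact Hca |].
    intros y Hy. destruct (Hcov y) as [j [Hj Hjy]]; [lra|]. exists j; split; [|exact Hjy].
    apply in_app_or in Hj as [Hj|[<-|Hj]]; apply in_or_app; [tauto | lra | tauto]. }
  rewrite lsum_app in IHi. lra.
Qed.

Lemma interval_finite_subcover {I} (A B : I -> R) c d :
  c <= d -> (forall y, c <= y <= d -> exists i, A i < y < B i) ->
  exists L : list I, forall y, c <= y <= d -> exists i, In i L /\ A i < y < B i.
Proof.
  intros Hcd Hcov.
  set (covered x := exists L : list I, forall y, c <= y <= x -> exists i, In i L /\ A i < y < B i).
  set (E x := c <= x <= d /\ covered x).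
  assert (HEc : E c).
  { split; [lra|]. destruct (Hcov c) as [i Hi]; [lra|].
    exists (i :: nil). intros y Hy. exists i. replace y with c by lra. simpl; tauto. }
  assert (HEb : bound E) by (exists d; intros x [Hx _]; lra).
  destruct (completeness E HEb (ex_intro _ c HEc)) as [s [Hub Hlub]].
  assert (Hcs : c <= s) by (apply Hub; exact HEc).
  assert (Hsd : s <= d) by (apply Hlub; intros x [Hx _]; lra).
  destruct (Hcov s) as [i Hi]; [lra|].
  (* some covered [c, x] reaches into the interval around s, which extends it beyond s *)
  assert (Hx : exists x, E x /\ A i < x).
  { apply NNPP; intros Hno. assert (s <= A i); [|lra].
    apply Hlub. intros x Hx. apply Rnot_lt_le; intros Hlt. apply Hno; eauto. }
  destruct Hx as [x [[Hx [L HL]] Hax]].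
  assert (Hext : forall z, c <= z <= (s + B i) / 2 -> covered z).
  { intros z Hz. exists (i :: L). intros y Hy. destruct (Rle_or_lt y x) as [Hyx|Hyx].
    - destruct (HL y) as [j [Hj Hjy]]; [lra|]. exists j. simpl; tauto.
    - exists i. assert (x <= s) by (apply Hub; split; [lra | exists L; exact HL]).
      simpl; split; [tauto | lra]. }
  destruct (Rle_or_lt d ((s + B i) / 2)) as [Hd|Hd].
  - apply Hext; lra.
  - assert ((s + B i) / 2 <= s); [apply Hub; split; [lra | apply Hext; lra] | lra].
Qed.

Lemma null_indexed_gap {I} (decI : forall x y : I, {x = y} + {x <> y}) N c d :
  null_indexed I N -> c < d -> exists x, c < x < d /\ ~ N x.
Proof.
  intros HN Hcd. apply NNPP; intros Hno.
  assert (HNcd : forall x, c < x < d -> N x)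
    by (intros x Hx; apply NNPP; intros Hx'; apply Hno; eauto).
  set (c' := (2 * c + d) / 3). set (d' := (c + 2 * d) / 3).
  destruct (HN ((d' - c') / 2)) as [A [B [HAB [Hcov Hsum]]]]; [unfold c', d'; lra|].
  destruct (interval_finite_subcover A B c' d') as [L HL]; [unfold c', d'; lra| |].
  { intros y Hy. apply Hcov, HNcd. unfold c', d' in Hy; lra. }
  assert (Hlen : d' - c' < lsum (fun i => B i - A i) (nodup decI L)).
  { apply cover_length_gt; [exact HAB | unfold c', d'; lra|].
    intros y Hy. destruct (HL y Hy) as [i [Hi Hiy]]. exists i. rewrite nodup_In. tauto. }
  specialize (Hsum (nodup decI L) (NoDup_nodup _ _)). unfold c', d' in *. lra.
Qed.

Definition lipschitz_at_scale (h : R -> R) (n : nat) (t : R) : Prop :=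
  forall u, Rabs (u - t) < / INR (S n) -> Rabs (h u - h t) <= INR (S n) * Rabs (u - t).

Lemma derivable_pt_lim_lipschitz_at_scale h t l : derivable_pt_lim h t l ->
  exists n, lipschitz_at_scale h n t.
Proof.
  intros Hd. destruct (Hd 1 Rlt_0_1) as [[d Hdpos] Hq]; simpl in Hq.
  destruct (INR_unbounded (Rmax (Rabs l + 1) (/ d))) as [n Hn].
  pose proof (Rmax_l (Rabs l + 1) (/ d)). pose proof (Rmax_r (Rabs l + 1) (/ d)).
  pose proof (Rabs_pos l). assert (0 < / d) by (apply Rinv_0_lt_compat; lra).
  assert (Hn' : Rmax (Rabs l + 1) (/ d) < INR (S n)) by (rewrite S_INR; lra).
  exists n. intros u Hu.
  destruct (Req_dec u t) as [->|Hut]; [rewrite !Rminus_diag, Rabs_R0; lra|].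
  assert (Hud : Rabs (u - t) < d).
  { eapply Rlt_trans; [exact Hu|]. rewrite <- (Rinv_inv d).
    apply Rinv_lt_contravar; [apply Rmult_lt_0_compat|]; lra. }
  specialize (Hq (u - t) ltac:(lra) Hud). replace (t + (u - t)) with u in Hq by ring.
  set (q := (h u - h t) / (u - t)) in Hq.
  replace (h u - h t) with (q * (u - t)) by (unfold q; field; lra).
  rewrite Rabs_mult. apply Rmult_le_compat_r; [apply Rabs_pos|].
  pose proof (Rabs_triang_inv q l). lra.
Qed.

Lemma Null_cover_family N (en : nat -> R) : Null N -> (forall n, 0 < en n) ->
  exists A B : nat -> nat -> R, forall n,
    (forall i, A n i <= B n i) /\ (forall x, N x -> exists i, A n i < x < B n i) /\
    (forall L, NoDup L -> lsum (fun i => B n i - A n i) L <= en n).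
Proof.
  intros HN Hen.
  assert (Hcov : forall n, exists AB : (nat -> R) * (nat -> R),
    (forall i, fst AB i <= snd AB i) /\ (forall x, N x -> exists i, fst AB i < x < snd AB i) /\
    (forall L, NoDup L -> lsum (fun i => snd AB i - fst AB i) L <= en n)).
  { intros n. destruct (Null_null_indexed N HN (en n) (Hen n)) as [A [B HAB]]. now exists (A, B). }
  apply choice in Hcov as [cov Hcov].
  exists (fun n => fst (cov n)), (fun n => snd (cov n)). exact Hcov.
Qed.

Lemma level_budget_bounds e n : 0 < e <= 1 ->
  0 < e / (2 * INR (S n) * 2 ^ S n) < / INR (S n).
Proof.
  intros He. assert (HSn : 1 <= INR (S n)) by (rewrite S_INR; pose proof (pos_INR n); lra).
  assert (1 <= 2 ^ S n) by (apply pow_R1_Rle; lra).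
  replace (e / (2 * INR (S n) * 2 ^ S n)) with (/ INR (S n) * (e / (2 * 2 ^ S n))) by (field; lra).
  assert (0 < / INR (S n)) by (apply Rinv_0_lt_compat; lra).
  assert (0 < e / (2 * 2 ^ S n) < 1).
  { split; [apply Rdiv_lt_0_compat; lra|].
    apply Rmult_lt_reg_r with (2 * 2 ^ S n); [lra|].
    unfold Rdiv. rewrite Rmult_assoc, Rinv_l; lra. }
  split; [nra|]. rewrite <- (Rmult_1_r (/ INR (S n))) at 2. apply Rmult_lt_compat_l; lra.
Qed.

(* The points of [N] where [h] is Lipschitz at scale [n] are covered by
   intervals of total length [en n]; [h] maps each of them into an interval [n + 1] times longer,
   centred at the image of a chosen such point. *)
Lemma null_indexed_image h N : Null N -> (forall t, N t -> exists n, lipschitz_at_scale h n t) ->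
  null_indexed (nat * nat) (fun y => exists t, N t /\ h t = y).
Proof.
  intros HN Hlip e He.
  set (e1 := Rmin e 1). assert (He1 : 0 < e1 <= 1) by (split; [apply Rmin_pos | apply Rmin_r]; lra).
  set (en n := e1 / (2 * INR (S n) * 2 ^ S n)).
  assert (Hen : forall n, 0 < en n < / INR (S n)) by (intros n; apply level_budget_bounds, He1).
  assert (HSn : forall n, 1 <= INR (S n)) by (intros n; rewrite S_INR; pose proof (pos_INR n); lra).
  destruct (Null_cover_family N en HN (fun n => proj1 (Hen n))) as [A [B Hcov]].
  assert (Hlen : forall n i, 0 <= B n i - A n i <= en n).
  { intros n i. destruct (Hcov n) as [HAB [_ Hs]]. specialize (HAB i).
    specialize (Hs (i :: nil) (NoDup_cons _ (@in_nil _ _) (NoDup_nil _))). simpl in Hs. lra. }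
  set (p n i := epsilon (inhabits 0) (fun t => lipschitz_at_scale h n t /\ A n i < t < B n i)).
  set (r ni := INR (S (fst ni)) * (B (fst ni) (snd ni) - A (fst ni) (snd ni))).
  assert (Hr : forall ni, 0 <= r ni)
    by (intros [n i]; unfold r; cbn [fst snd]; pose proof (HSn n); pose proof (Hlen n i); nra).
  exists (fun ni => h (p (fst ni) (snd ni)) - r ni), (fun ni => h (p (fst ni) (snd ni)) + r ni).
  split; [intros ni; specialize (Hr ni); lra | split].
  - intros y [t [HNt <-]]. destruct (Hlip t HNt) as [n Hnt].
    destruct (Hcov n) as [_ [Hcovn _]]. destruct (Hcovn t HNt) as [i Hi].
    assert (Hp : lipschitz_at_scale h n (p n i) /\ A n i < p n i < B n i)
      by (apply epsilon_spec; exists t; split; assumption).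
    destruct Hp as [Hplip Hpi].
    assert (Hdist : Rabs (t - p n i) < B n i - A n i) by (apply Rabs_def1; lra).
    specialize (Hplip t ltac:(pose proof (Hen n); pose proof (Hlen n i); lra)).
    assert (Hlt : Rabs (h t - h (p n i)) < r (n, i)).
    { eapply Rle_lt_trans; [exact Hplip|]. unfold r; cbn [fst snd].
      apply Rmult_lt_compat_l; [pose proof (HSn n); lra | exact Hdist]. }
    exists (n, i). cbn [fst snd]. apply Rabs_def2 in Hlt. lra.
  - intros L HL. apply Rle_trans with e1; [| apply Rmin_l].
    apply (lsum_pairs_le Nat.eq_dec Nat.eq_dec _ (fun n => e1 * / 2 ^ S n)); auto.
    + intros ni. specialize (Hr ni). lra.
    + intros n l Hl. cbn [fst snd].
      rewrite (lsum_ext _ (fun i => (2 * INR (S n)) * (B n i - A n i)))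
        by (intros i; unfold r; cbn [fst snd]; ring).
      rewrite lsum_scal. destruct (Hcov n) as [_ [_ Hs]]. specialize (Hs l Hl).
      apply Rle_trans with (2 * INR (S n) * en n).
      * apply Rmult_le_compat_l; [pose proof (HSn n); lra | exact Hs].
      * right. unfold en. field. split; [apply pow_nonzero | pose proof (HSn n)]; lra.
    + intros l Hl. rewrite lsum_scal. pose proof (lsum_geometric_le l Hl). nra.
Qed.

Lemma continuity_pt_eps_delta f t : continuity_pt f t ->
  forall e, 0 < e -> exists d, 0 < d /\ forall u, Rabs (u - t) < d -> Rabs (f u - f t) < e.
Proof.
  intros Hc e He. destruct (Hc e He) as [d [Hd Hnear]]. exists d; split; [exact Hd|]. intros u Hu.
  destruct (Req_dec t u) as [<-|Htu]; [rewrite Rminus_diag, Rabs_R0; exact He|].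
  exact (Hnear u (conj (conj I Htu) Hu)).
Qed.

Lemma last_crossing h a b y : (forall t, continuity_pt h t) -> a <= b -> h a <= y < h b ->
  exists s, a <= s < b /\ h s = y /\ forall t, s < t <= b -> y < h t.
Proof.
  intros Hc Hab Hy.
  set (E t := a <= t <= b /\ h t <= y).
  assert (HEa : E a) by (split; lra).
  assert (HEb : bound E) by (exists b; intros t [Ht _]; lra).
  destruct (completeness E HEb (ex_intro _ a HEa)) as [s [Hub Hlub]].
  assert (Has : a <= s) by (apply Hub; exact HEa).
  assert (Hsb : s <= b) by (apply Hlub; intros t [Ht _]; lra).
  assert (Hle : h s <= y).
  { apply Rnot_lt_le; intros Hlt.
    destruct (continuity_pt_eps_delta h s (Hc s) (h s - y)) as [d [Hd Hnear]]; [lra|].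
    assert (s <= s - d); [|lra].
    apply Hlub. intros t [Ht Hty]. apply Rnot_lt_le; intros Hts.
    assert (t <= s) by (apply Hub; split; assumption).
    specialize (Hnear t ltac:(apply Rabs_def1; lra)). apply Rabs_def2 in Hnear. lra. }
  assert (Hsb' : s < b) by (destruct (Req_dec s b) as [->|]; lra).
  assert (Hright : forall t, s < t <= b -> y < h t).
  { intros t Ht. apply Rnot_le_lt; intros Hty. assert (t <= s) by (apply Hub; split; lra). lra. }
  exists s. split; [lra | split; [| exact Hright]].
  apply Rle_antisym; [exact Hle|]. apply Rnot_lt_le; intros Hlt.
  destruct (continuity_pt_eps_delta h s (Hc s) (y - h s)) as [d [Hd Hnear]]; [lra|].
  set (t := Rmin b (s + d / 2)).
  assert (Hts : s < t <= s + d / 2) by (split; [apply Rmin_glb_lt | apply Rmin_r]; lra).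
  specialize (Hnear t ltac:(apply Rabs_def1; lra)). apply Rabs_def2 in Hnear.
  specialize (Hright t ltac:(split; [lra | apply Rmin_l])). lra.
Qed.

Lemma derivable_pt_lim_nonneg_right h s l b : derivable_pt_lim h s l -> s < b ->
  (forall t, s < t <= b -> h s < h t) -> 0 <= l.
Proof.
  intros Hd Hsb Hinc. apply Rnot_lt_le; intros Hl.
  destruct (Hd (- l / 2)) as [[d Hdpos] Hq]; [lra|]; simpl in Hq.
  set (k := Rmin (d / 2) (b - s)).
  assert (Hk : 0 < k <= b - s /\ k <= d / 2)
    by (split; [split; [apply Rmin_pos | apply Rmin_r] | apply Rmin_l]; lra).
  specialize (Hq k ltac:(lra) ltac:(rewrite Rabs_pos_eq; lra)).
  specialize (Hinc (s + k) ltac:(lra)).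
  assert (0 < (h (s + k) - h s) / k) by (apply Rdiv_lt_0_compat; lra).
  apply Rabs_def2 in Hq. lra.
Qed.

Lemma nonincreasing_of_deriv_neg_ae h h' N a b :
  (forall t, derivable_pt_lim h t (h' t)) -> Null N -> a <= b ->
  (forall t, a <= t <= b -> ~ N t -> h' t < 0) -> h b <= h a.
Proof.
  intros Hd HN Hab Hneg. apply Rnot_lt_le; intros Hlt.
  (* each value in (h a, h b) is taken at a point where h' >= 0, hence in N; but h (N) is null *)
  assert (Hnull : null_indexed (nat * nat) (fun y => exists t, N t /\ h t = y)).
  { apply null_indexed_image; [exact HN|].
    intros t _. exact (derivable_pt_lim_lipschitz_at_scale h t (h' t) (Hd t)). }
  destruct (null_indexed_gap (prod_eq_dec Nat.eq_dec Nat.eq_dec) _ (h a) (h b) Hnull Hlt)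
    as [y [Hy Hny]].
  assert (Hc : forall t, continuity_pt h t)
    by (intros t; apply derivable_continuous_pt; exists (h' t); apply Hd).
  destruct (last_crossing h a b y Hc Hab) as [s [Hs [Hhs Hright]]]; [lra|].
  assert (Hs' : 0 <= h' s).
  { apply (derivable_pt_lim_nonneg_right h s (h' s) b (Hd s)); [lra|].
    intros t Ht. rewrite Hhs. now apply Hright. }
  apply Hny. exists s. split; [| exact Hhs].
  apply NNPP; intros HNs. specialize (Hneg s ltac:(lra) HNs). lra.
Qed.

Lemma le_of_forall_gt_mul x M L : 0 <= L -> (forall M', M < M' -> x <= M' * L) -> x <= M * L.
Proof.
  intros HL Hx. apply Rle_plus_epsilon; intros e He.
  assert (0 < e / (L + 1)) by (apply Rdiv_lt_0_compat; lra).
  specialize (Hx (M + e / (L + 1)) ltac:(lra)).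
  assert (e / (L + 1) * L <= e).
  { apply Rmult_le_reg_r with (L + 1); [lra|].
    replace (e / (L + 1) * L * (L + 1)) with (e * L) by (field; lra). nra. }
  nra.
Qed.

Lemma sub_le_of_deriv_le_ae g g' N a b M :
  (forall t, derivable_pt_lim g t (g' t)) -> Null N -> a <= b ->
  (forall t, a <= t <= b -> ~ N t -> g' t <= M) -> g b - g a <= M * (b - a).
Proof.
  intros Hd HN Hab HM. apply le_of_forall_gt_mul; [lra|]. intros M' HM'.
  assert (g b - M' * b <= g a - M' * a); [|lra].
  apply (nonincreasing_of_deriv_neg_ae (fun t => g t - M' * t) (fun t => g' t - M') N a b); auto.
  - intros t. apply derivable_pt_lim_minus; [apply Hd|].
    pose proof (derivable_pt_lim_scal id M' t 1 (derivable_pt_lim_id t)) as Hlin.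
    rewrite Rmult_1_r in Hlin. exact Hlin.
  - intros t Ht HNt. specialize (HM t Ht HNt). lra.
Qed.

Lemma mean_value_ineq_ae g g' N u v M :
  (forall t, derivable_pt_lim g t (g' t)) -> Null N ->
  (forall t, Rmin u v <= t <= Rmax u v -> ~ N t -> Rabs (g' t) <= M) ->
  Rabs (g v - g u) <= M * Rabs (v - u).
Proof.
  intros Hd HN.
  assert (Hle : forall a b, a <= b -> (forall t, a <= t <= b -> ~ N t -> Rabs (g' t) <= M) ->
                  Rabs (g b - g a) <= M * (b - a)).
  { intros a b Hab HM.
    assert (Hup : g b - g a <= M * (b - a)).
    { apply (sub_le_of_deriv_le_ae g g' N); auto.
      intros t Ht HNt. specialize (HM t Ht HNt). pose proof (Rle_abs (g' t)). lra. }
    assert (Hdown : - g b - - g a <= M * (b - a)).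
    { apply (sub_le_of_deriv_le_ae (fun t => - g t) (fun t => - g' t) N); auto.
      - intros t. apply derivable_pt_lim_opp, Hd.
      - intros t Ht HNt. specialize (HM t Ht HNt). pose proof (Rle_abs (- g' t)).
        rewrite Rabs_Ropp in *. lra. }
    apply Rabs_le; lra. }
  intros HM. destruct (Rle_or_lt u v) as [Huv|Huv].
  - rewrite (Rabs_pos_eq (v - u)) by lra. apply Hle; [exact Huv|].
    rewrite Rmin_left, Rmax_right in HM by lra. exact HM.
  - rewrite Rabs_minus_sym, (Rabs_minus_sym v u), (Rabs_pos_eq (u - v)) by lra.
    apply Hle; [lra|].
    rewrite Rmin_right, Rmax_left in HM by lra. exact HM.
Qed.

Lemma le_of_ae_le_continuous (f W : R -> R) :
  continuity f -> (forall s t, 0 <= s -> s <= t -> W t <= W s) ->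
  ae (fun x => f x <= W (Rabs x)) -> forall t, f t <= W (Rabs t).
Proof.
  intros Hf HW [N [HN HfN]] t. apply Rnot_lt_le; intros Hlt.
  destruct (continuity_pt_eps_delta f t (Hf t) (f t - W (Rabs t))) as [d [Hd Hnear]]; [lra|].
  assert (Hs : exists x, Rabs (x - t) < d /\ Rabs t <= Rabs x /\ ~ N x).
  { pose proof (Null_null_indexed N HN) as HN'. destruct (Rle_or_lt 0 t).
    - destruct (null_indexed_gap Nat.eq_dec N t (t + d) HN') as [x [Hx HNx]]; [lra|].
      exists x. rewrite (Rabs_pos_eq t), (Rabs_pos_eq x) by lra.
      repeat split; [apply Rabs_def1 | |]; auto; lra.
    - destruct (null_indexed_gap Nat.eq_dec N (t - d) t HN') as [x [Hx HNx]]; [lra|].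
      exists x. rewrite (Rabs_left t), (Rabs_left x) by lra.
      repeat split; [apply Rabs_def1 | |]; auto; lra. }
  destruct Hs as [x [Hxt [Habs HNx]]].
  specialize (Hnear x Hxt). specialize (HfN x HNx).
  specialize (HW _ _ (Rabs_pos t) Habs). apply Rabs_def2 in Hnear. lra.
Qed.

(** * Dyadic sums *)

Lemma lsum_telescoping_le (g T : Z -> R) lo hi :
  (forall j, 0 <= g j) -> (forall j, g j <= T j - T (j - 1)%Z) -> (forall j, lo <= T j <= hi) ->
  forall J, NoDup J -> lsum g J <= hi - lo.
Proof.
  intros Hg HT Hb J HJ.
  assert (Hrange : forall m n,
    lsum g (map (fun i => (m + Z.of_nat i)%Z) (seq 0 n)) <= T (m + Z.of_nat n - 1)%Z - T (m - 1)%Z).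
  { intros m n. induction n as [|n IH].
    - simpl. replace (m + 0 - 1)%Z with (m - 1)%Z by lia. lra.
    - rewrite seq_S, map_app, lsum_app. simpl. specialize (HT (m + Z.of_nat n)%Z).
      replace (m + Z.pos (Pos.of_succ_nat n) - 1)%Z with (m + Z.of_nat n)%Z by lia. lra. }
  set (N := list_max (map (fun j => Z.to_nat (Z.abs j)) J)).
  eapply Rle_trans.
  - apply (lsum_incl_le g J (map (fun i => (- Z.of_nat N + Z.of_nat i)%Z) (seq 0 (S (2 * N)))));
      auto.
    intros j Hj. apply in_map_iff. exists (Z.to_nat (j + Z.of_nat N)).
    assert (Z.to_nat (Z.abs j) <= N)%nat.
    { pose proof (proj1 (list_max_le (map (fun j => Z.to_nat (Z.abs j)) J) N) (le_n _)) as Hmax.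
      rewrite Forall_forall in Hmax. apply Hmax, in_map_iff. now exists j. }
    split; [lia | apply in_seq; lia].
  - eapply Rle_trans; [apply Hrange|].
    pose proof (Hb (- Z.of_nat N + Z.of_nat (S (2 * N)) - 1)%Z).
    pose proof (Hb (- Z.of_nat N - 1)%Z).
    lra.
Qed.

Lemma Rdiv_le_cross a b c d : 0 < b -> 0 < d -> a * d <= c * b -> a / b <= c / d.
Proof.
  intros Hb Hd Hcross. apply Rmult_le_reg_r with (b * d); [nra|].
  replace (a / b * (b * d)) with (a * d) by (field; lra).
  replace (c / d * (b * d)) with (c * b) by (field; lra). exact Hcross.
Qed.

Definition sigmoid (u : R) : R := u / (1 + Rabs u).

Lemma sigmoid_bound u : -1 <= sigmoid u <= 1.
Proof.
  unfold sigmoid. pose proof (Rabs_pos u). pose proof (Rle_abs u). pose proof (Rle_abs (- u)).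
  rewrite Rabs_Ropp in *.
  split; apply Rmult_le_reg_r with (1 + Rabs u);
    (lra || (unfold Rdiv; rewrite Rmult_assoc, Rinv_l; lra)).
Qed.

Lemma sigmoid_step u : / (1 + u ^ 2) <= 4 * (sigmoid (u + 1) - sigmoid u).
Proof.
  unfold sigmoid. rewrite <- (Rmult_1_l (/ _)). change (1 * / (1 + u ^ 2)) with (1 / (1 + u ^ 2)).
  destruct (Rle_or_lt 0 u) as [Hu|Hu]; [|destruct (Rle_or_lt (u + 1) 0) as [Hu1|Hu1]].
  - rewrite (Rabs_pos_eq u), (Rabs_pos_eq (u + 1)) by lra.
    replace (4 * ((u + 1) / (1 + (u + 1)) - u / (1 + u))) with (4 / ((u + 2) * (1 + u)))
      by (field; lra).
    apply Rdiv_le_cross; nra.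
  - rewrite (Rabs_left u), (Rabs_left1 (u + 1)) by lra.
    replace (4 * ((u + 1) / (1 + - (u + 1)) - u / (1 + - u))) with (4 / ((- u) * (1 - u)))
      by (field; lra).
    apply Rdiv_le_cross; nra.
  - rewrite (Rabs_left u), (Rabs_pos_eq (u + 1)) by lra.
    replace (4 * ((u + 1) / (1 + (u + 1)) - u / (1 + - u)))
      with (4 * ((u + 1) * (1 - u) - u * (u + 2)) / ((u + 2) * (1 - u))) by (field; lra).
    apply Rdiv_le_cross; nra.
Qed.

Lemma lsum_lorentz_shift_le a K : NoDup K -> lsum (fun k => / (1 + (a - IZR k) ^ 2)) K <= 8.
Proof.
  intros HK. replace 8 with (4 - (-4)) by ring.
  apply (lsum_telescoping_le _ (fun k => 4 * sigmoid (IZR k + 1 - a))); [| | | exact HK].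
  - intros k. apply Rlt_le, Rinv_0_lt_compat. pose proof (pow2_ge_0 (a - IZR k)). lra.
  - intros k. rewrite minus_IZR.
    pose proof (sigmoid_step (IZR k - a)) as Hstep.
    replace ((a - IZR k) ^ 2) with ((IZR k - a) ^ 2) by ring.
    replace (IZR k - 1 + 1 - a) with (IZR k - a) by ring.
    replace (IZR k - a + 1) with (IZR k + 1 - a) in Hstep by ring. lra.
  - intros k. pose proof (sigmoid_bound (IZR k + 1 - a)). lra.
Qed.

Lemma powerRZ2_pos j : 0 < powerRZ 2 j.
Proof. apply powerRZ_lt; lra. Qed.

Lemma powerRZ2_pred j : powerRZ 2 j = 2 * powerRZ 2 (j - 1).
Proof.
  replace j with ((j - 1) + 1)%Z at 1 by ring. rewrite powerRZ_add by lra. simpl. ring.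
Qed.

Lemma lsum_dyadic_lorentz_le rho J : 0 < rho -> NoDup J ->
  lsum (fun j => powerRZ 2 j * / (1 + (powerRZ 2 j * rho) ^ 2)) J <= 4 / rho.
Proof.
  intros Hr HJ. replace (4 / rho) with (4 / rho - 0) by ring.
  set (F u := 4 * u / (1 + u)).
  apply (lsum_telescoping_le _ (fun j => F (2 * powerRZ 2 j * rho) / rho)); [| | | exact HJ].
  - intros j. pose proof (powerRZ2_pos j).
    apply Rmult_le_pos; [lra | apply Rlt_le, Rinv_0_lt_compat; nra].
  - intros j. rewrite (powerRZ2_pred j). pose proof (powerRZ2_pos (j - 1)).
    set (u := 2 * powerRZ 2 (j - 1) * rho). assert (Hu : 0 < u) by (unfold u; nra).
    replace (2 * powerRZ 2 (j - 1)) with (u / rho) by (unfold u; field; lra). unfold F.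
    replace (u / rho * / (1 + u ^ 2)) with (u / (rho * (1 + u ^ 2))) by (field; split; nra).
    replace (4 * (2 * (u / rho) * rho) / (1 + 2 * (u / rho) * rho) / rho - 4 * u / (1 + u) / rho)
      with (4 * u / (rho * ((1 + 2 * u) * (1 + u)))) by (field; split; lra).
    apply (Rdiv_le_cross u (rho * (1 + u ^ 2))); [nra | nra |].
    assert (0 <= rho * u * (3 - 3 * u + 2 * u ^ 2)) by (apply Rmult_le_pos; nra). nra.
  - intros j. pose proof (powerRZ2_pos j). unfold F.
    set (u := 2 * powerRZ 2 j * rho). assert (0 < u) by (unfold u; nra).
    assert (0 <= 4 * u / (1 + u) <= 4).
    { split; [apply Rlt_le, Rdiv_lt_0_compat; lra|].
      apply Rmult_le_reg_r with (1 + u); [lra|]. unfold Rdiv. rewrite Rmult_assoc, Rinv_l; lra. }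
    unfold Rdiv at 2 4. split; [apply Rmult_le_pos | apply Rmult_le_compat_r];
      try (apply Rlt_le, Rinv_0_lt_compat); lra.
Qed.

(** * Consequences of the moment condition on the majorant *)

Section Majorant.

Variables (W : R -> R) (v : R).
Hypothesis W_moment : ImpInt0 (fun s => s * W s) v.
Hypothesis W_pos : forall s, 0 <= s -> 0 < W s.
Hypothesis W_antitone : forall s t, 0 <= s -> s <= t -> W t <= W s.

(* Meaningful only for [b >= 0], where the moment condition provides the integral. *)
Definition moment (b : R) : R :=
  epsilon (inhabits 0) (fun w => RInt_eq (fun s => s * W s) 0 b w).

Lemma moment_spec b : 0 <= b -> RInt_eq (fun s => s * W s) 0 b (moment b).
Proof. intros Hb. unfold moment. apply epsilon_spec, (proj1 W_moment), Hb. Qed.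

Lemma moment_increment a b : 0 <= a -> a <= b -> a * W b * (b - a) <= moment b - moment a.
Proof.
  intros Ha Hab.
  destruct (moment_spec b ltac:(lra)) as [prb <-]. destruct (moment_spec a Ha) as [pra <-].
  set (prab := RiemannInt_P23 prb (conj Ha Hab)).
  pose proof (RiemannInt_P26 pra prab prb) as Hsplit.
  enough (a * W b * (b - a) <= RiemannInt prab) by lra.
  apply (RiemannInt_const_bound (u := b * W a) prab Hab).
  intros x Hx. pose proof (W_antitone a x Ha ltac:(lra)).
  pose proof (W_antitone x b ltac:(lra) ltac:(lra)).
  pose proof (W_pos b ltac:(lra)). pose proof (W_pos x ltac:(lra)). split; nra.
Qed.

Lemma moment_bounds b : 0 <= b -> 0 <= moment b <= Rabs v + 1.
Proof.
  intros Hb. split.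
  - pose proof (moment_increment 0 b (Rle_refl 0) Hb).
    destruct (moment_spec 0 (Rle_refl 0)) as [pr0 Hpr0]. rewrite RiemannInt_P9 in Hpr0. lra.
  - destruct (proj2 W_moment 1 Rlt_0_1) as [M HM].
    set (b' := Rmax b M). assert (Hbb' : b <= b') by apply Rmax_l.
    pose proof (moment_increment b b' Hb Hbb'). pose proof (W_pos b' ltac:(lra)).
    assert (0 <= b * W b' * (b' - b)) by (apply Rmult_le_pos; [apply Rmult_le_pos|]; lra).
    specialize (HM b' (moment b') (Rmax_r b M) (moment_spec b' ltac:(lra))).
    apply Rabs_def2 in HM. pose proof (Rle_abs v). lra.
Qed.

Lemma W_le_inv_sq s : 0 < s -> W s <= 4 * (Rabs v + 1) / (s * s).
Proof.
  intros Hs. pose proof (moment_increment (s / 2) s ltac:(lra) ltac:(lra)).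
  pose proof (moment_bounds s ltac:(lra)). pose proof (moment_bounds (s / 2) ltac:(lra)).
  apply Rmult_le_reg_r with (s * s); [nra|].
  replace (4 * (Rabs v + 1) / (s * s) * (s * s)) with (4 * (Rabs v + 1)) by (field; lra). nra.
Qed.

(* [Wsh (Rabs u)] bounds [W (Rabs t)] for every [t] with [Rabs (t - u) <= 1]. *)
Definition Wsh (s : R) : R := W (Rmax 0 (s - 1)).

Lemma Wsh_pos s : 0 < Wsh s.
Proof. apply W_pos, Rmax_l. Qed.

Lemma Wsh_antitone s t : s <= t -> Wsh t <= Wsh s.
Proof. intros Hst. apply W_antitone; [apply Rmax_l | apply Rle_max_compat_l; lra]. Qed.

Lemma W_le_Wsh s : 0 <= s -> W s <= Wsh s.
Proof. intros Hs. apply W_antitone; [apply Rmax_l | apply Rmax_lub; lra]. Qed.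

Definition Cw : R := 6 * Rabs (W 0) + 20 * (Rabs v + 1).

Lemma Cw_pos : 0 < Cw.
Proof. pose proof (Rabs_pos (W 0)). pose proof (Rabs_pos v). unfold Cw; lra. Qed.

Lemma Wsh_le_lorentz s : 0 <= s -> Wsh s <= Cw / (1 + s ^ 2).
Proof.
  intros Hs. pose proof (W_pos 0 (Rle_refl 0)). pose proof (Rle_abs (W 0)).
  pose proof (Rabs_pos v). pose proof (Wsh_pos s).
  apply Rmult_le_reg_r with (1 + s ^ 2); [nra|].
  replace (Cw / (1 + s ^ 2) * (1 + s ^ 2)) with Cw by (field; nra). unfold Cw.
  destruct (Rlt_or_le s 2) as [Hs2|Hs2].
  - assert (Wsh s <= W 0) by (apply W_antitone; [lra | apply Rmax_l]).
    assert (Wsh s * (1 + s ^ 2) <= W 0 * 5) by (apply Rmult_le_compat; nra). lra.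
  - assert (Wsh s <= W (s / 2)) by (unfold Wsh; rewrite Rmax_right by lra; apply W_antitone; lra).
    pose proof (W_le_inv_sq (s / 2) ltac:(lra)).
    assert (Wsh s * (s * s) <= 16 * (Rabs v + 1)).
    { apply Rle_trans with (4 * (Rabs v + 1) / (s / 2 * (s / 2)) * (s * s));
        [apply Rmult_le_compat_r; nra | right; field; lra]. }
    assert (Wsh s <= W 0) by (apply W_antitone; [lra | apply Rmax_l]).
    replace (s ^ 2) with (s * s) by ring. lra.
Qed.

(* Below 2 the shifted majorant is bounded by W 0, above it by W (s / 2), and
   (s / 2)^2 W (s / 2) is controlled by the moment of W over [s / 4, s / 2]. *)
Lemma sq_Wsh_le_increments s : 0 < s ->
  s * s * Wsh s <= W 0 * (4 / 3 * Rmin (s ^ 2) 4 - 4 / 3 * Rmin ((s / 2) ^ 2) 4)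
                   + 16 * (moment (s / 2) - moment (s / 4)).
Proof.
  intros Hs. pose proof (moment_increment (s / 4) (s / 2) ltac:(lra) ltac:(lra)).
  destruct (Rlt_or_le s 2) as [Hs2|Hs2].
  - assert (Wsh s <= W 0) by (apply W_antitone; [lra | apply Rmax_l]).
    rewrite !Rmin_left by nra. pose proof (W_pos (s / 2) ltac:(lra)). nra.
  - assert (Wsh s <= W (s / 2)) by (unfold Wsh; rewrite Rmax_right by lra; apply W_antitone; lra).
    assert (Rmin ((s / 2) ^ 2) 4 <= Rmin (s ^ 2) 4).
    { apply Rmin_glb; [eapply Rle_trans; [apply Rmin_l | nra] | apply Rmin_r]. }
    pose proof (W_pos 0 (Rle_refl 0)). nra.
Qed.

Lemma lsum_dyadic_Wsh_le rho J : 0 < rho -> NoDup J ->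
  lsum (fun j => powerRZ 2 j * powerRZ 2 j * Wsh (powerRZ 2 j * rho)) J <= Cw / (rho * rho).
Proof.
  intros Hr HJ. pose proof (W_pos 0 (Rle_refl 0)) as HW0.
  set (T1 j := 4 / 3 * Rmin ((powerRZ 2 j * rho) ^ 2) 4).
  set (T2 j := moment (powerRZ 2 j * rho / 2)).
  assert (Hrr : 0 < rho * rho) by nra.
  apply Rle_trans with ((16 / 3 * W 0 + 16 * (Rabs v + 1)) / (rho * rho) - 0).
  2: { rewrite Rminus_0_r. apply Rmult_le_compat_r; [apply Rlt_le, Rinv_0_lt_compat; lra|].
       unfold Cw. pose proof (Rabs_pos v). pose proof (Rle_abs (W 0)). lra. }
  apply (lsum_telescoping_le _ (fun j => (W 0 * T1 j + 16 * T2 j) / (rho * rho))); [| | | exact HJ].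
  - intros j. pose proof (powerRZ2_pos j). pose proof (Wsh_pos (powerRZ 2 j * rho)).
    apply Rmult_le_pos; [nra | lra].
  - intros j. unfold T1, T2. rewrite (powerRZ2_pred j). pose proof (powerRZ2_pos (j - 1)).
    set (s := 2 * powerRZ 2 (j - 1) * rho). assert (Hs : 0 < s) by (unfold s; nra).
    replace (2 * powerRZ 2 (j - 1) * (2 * powerRZ 2 (j - 1))) with (s * s / (rho * rho))
      by (unfold s; field; lra).
    replace (2 * powerRZ 2 (j - 1) * rho / 2) with (s / 2) by (unfold s; field).
    replace (powerRZ 2 (j - 1) * rho / 2) with (s / 4) by (unfold s; field).
    replace (powerRZ 2 (j - 1) * rho) with (s / 2) by (unfold s; field).
    pose proof (sq_Wsh_le_increments s Hs).
    unfold Rdiv. rewrite <- Rmult_minus_distr_r.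
    replace (s * s * / (rho * rho) * Wsh s) with (s * s * Wsh s * / (rho * rho)) by ring.
    apply Rmult_le_compat_r; [apply Rlt_le, Rinv_0_lt_compat; lra | lra].
  - intros j. pose proof (powerRZ2_pos j). unfold T1, T2.
    assert (0 <= Rmin ((powerRZ 2 j * rho) ^ 2) 4 <= 4)
      by (split; [apply Rmin_glb; nra | apply Rmin_r]).
    pose proof (moment_bounds (powerRZ 2 j * rho / 2) ltac:(nra)).
    split; unfold Rdiv; [apply Rmult_le_pos; [nra | apply Rlt_le, Rinv_0_lt_compat; lra]|].
    apply Rmult_le_compat_r; [apply Rlt_le, Rinv_0_lt_compat; lra | nra].
Qed.

End Majorant.

(** * Pointwise bounds for the wavelet *)

Lemma Cnorm_continuous f : Ccontinuous f -> continuity (fun t => Cnorm (f t)).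
Proof.
  intros [Hre Him] t e He.
  destruct (continuity_pt_eps_delta _ t (Hre t) (e / 2)) as [d1 [Hd1 Hre_near]]; [lra|].
  destruct (continuity_pt_eps_delta _ t (Him t) (e / 2)) as [d2 [Hd2 Him_near]]; [lra|].
  exists (Rmin d1 d2). split; [apply Rmin_pos; lra|].
  intros u [_ Hu]. simpl in *. unfold R_dist in *.
  specialize (Hre_near u (Rlt_le_trans _ _ _ Hu (Rmin_l _ _))).
  specialize (Him_near u (Rlt_le_trans _ _ _ Hu (Rmin_r _ _))).
  eapply Rle_lt_trans; [apply Rabs_Cnorm_sub_le|].
  eapply Rle_lt_trans; [apply Cnorm_sub_le_Rabs_parts | lra].
Qed.

Lemma Ccontinuous_of_derivable f f' :
  (forall x, derivable_pt_lim (fun t => Cre (f t)) x (Cre (f' x))) ->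
  (forall x, derivable_pt_lim (fun t => Cim (f t)) x (Cim (f' x))) -> Ccontinuous f.
Proof.
  intros Hre Him. split; intros x; apply derivable_continuous_pt.
  - exists (Cre (f' x)); apply Hre.
  - exists (Cim (f' x)); apply Him.
Qed.

Lemma Cnorm_le_majorant W f : Ccontinuous f -> radial_decr_L1_majorant W f ->
  forall t, Cnorm (f t) <= W (Rabs t).
Proof.
  intros Hf [_ [HW [_ Hae]]].
  exact (le_of_ae_le_continuous _ W (Cnorm_continuous f Hf) HW Hae).
Qed.

Lemma Cnorm_sub_le_derivative_majorant W f f' :
  (forall x, derivable_pt_lim (fun t => Cre (f t)) x (Cre (f' x))) ->
  (forall x, derivable_pt_lim (fun t => Cim (f t)) x (Cim (f' x))) ->
  radial_decr_L1_majorant W f' -> forall u w, Rabs (w - u) <= 1 ->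
  Cnorm (Csub (f w) (f u)) <= 2 * Wsh W (Rabs u) * Rabs (w - u).
Proof.
  intros Hre Him [_ [HW [_ [N [HN HNf]]]]] u w Hwu.
  assert (HM : forall t, Rmin u w <= t <= Rmax u w -> ~ N t -> Cnorm (f' t) <= Wsh W (Rabs u)).
  { intros t Ht HNt. eapply Rle_trans; [apply HNf, HNt|].
    apply HW; [apply Rmax_l | apply Rmax_lub; [apply Rabs_pos|]].
    assert (Htu : Rabs (t - u) <= 1).
    { apply Rabs_le. destruct (Rle_or_lt u w).
      - rewrite Rmin_left, Rmax_right in Ht by lra. rewrite Rabs_pos_eq in Hwu by lra. lra.
      - rewrite Rmin_right, Rmax_left in Ht by lra. rewrite Rabs_left in Hwu by lra. lra. }
    pose proof (Rabs_triang_inv u (u - t)) as Htri. replace (u - (u - t)) with t in Htri by ring.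
    rewrite (Rabs_minus_sym u t) in Htri. lra. }
  pose proof (mean_value_ineq_ae _ _ N u w _ Hre HN
                (fun t Ht HNt => Rle_trans _ _ _ (Rabs_Cre_le (f' t)) (HM t Ht HNt))).
  pose proof (mean_value_ineq_ae _ _ N u w _ Him HN
                (fun t Ht HNt => Rle_trans _ _ _ (Rabs_Cim_le (f' t)) (HM t Ht HNt))).
  eapply Rle_trans; [apply Cnorm_sub_le_Rabs_parts | lra].
Qed.

(** * The kernel series *)

Lemma kernel_term_eq psi eps x y j k :
  kernel_term psi eps x y (j, k) =
  Cscale (eps j k * powerRZ 2 j)
    (Cmul (psi (powerRZ 2 j * x - IZR k)) (Cconj (psi (powerRZ 2 j * y - IZR k)))).
Proof.
  unfold kernel_term, psi_jk; cbn [fst snd].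
  destruct (psi (powerRZ 2 j * x - IZR k)) as [a b], (psi (powerRZ 2 j * y - IZR k)) as [c d].
  pose proof (sqrt_sqrt (powerRZ 2 j) (Rlt_le _ _ (powerRZ2_pos j))) as Hs.
  set (s := sqrt (powerRZ 2 j)) in *. rewrite <- Hs. cx_ring.
Qed.

Lemma kernel_term_swap psi eps x y i :
  kernel_term psi eps x y i = Cconj (kernel_term psi eps y x i).
Proof. unfold kernel_term; cx_ring. Qed.

Lemma Cnorm_kernel_term_sub_swap psi eps x y w i :
  Cnorm (Csub (kernel_term psi eps x w i) (kernel_term psi eps x y i)) =
  Cnorm (Csub (kernel_term psi eps w x i) (kernel_term psi eps y x i)).
Proof.
  rewrite (kernel_term_swap psi eps x w), (kernel_term_swap psi eps x y), <- Cnorm_conj.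
  f_equal. cx_ring.
Qed.

Lemma sign_seq_abs eps j k : sign_seq eps -> Rabs (eps j k) = 1.
Proof. intros Heps. destruct (Heps j k) as [-> | ->]; [apply Rabs_R1 | rewrite Rabs_left; lra]. Qed.

Lemma Cnorm_kernel_term psi eps x y j k : sign_seq eps ->
  Cnorm (kernel_term psi eps x y (j, k)) =
  powerRZ 2 j * (Cnorm (psi (powerRZ 2 j * x - IZR k)) * Cnorm (psi (powerRZ 2 j * y - IZR k))).
Proof.
  intros Heps. rewrite kernel_term_eq, Cnorm_scale, Cnorm_mul, Cnorm_conj, Rabs_mult.
  rewrite sign_seq_abs, Rabs_pos_eq by (auto || apply Rlt_le, powerRZ2_pos). ring.
Qed.

Lemma Cnorm_kernel_term_sub psi eps x y z j k : sign_seq eps ->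
  Cnorm (Csub (kernel_term psi eps z y (j, k)) (kernel_term psi eps x y (j, k))) =
  powerRZ 2 j * (Cnorm (Csub (psi (powerRZ 2 j * z - IZR k)) (psi (powerRZ 2 j * x - IZR k)))
                 * Cnorm (psi (powerRZ 2 j * y - IZR k))).
Proof.
  intros Heps. rewrite !kernel_term_eq.
  match goal with |- Cnorm (Csub (Cscale ?c (Cmul ?A ?B)) (Cscale _ (Cmul ?A' _))) = _ =>
    replace (Csub (Cscale c (Cmul A B)) (Cscale c (Cmul A' B))) with (Cscale c (Cmul (Csub A A') B))
      by cx_ring end.
  rewrite Cnorm_scale, Cnorm_mul, Cnorm_conj, Rabs_mult.
  rewrite sign_seq_abs, Rabs_pos_eq by (auto || apply Rlt_le, powerRZ2_pos). ring.
Qed.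

Lemma Rabs_scale_sub p x y : 0 < p -> Rabs (p * x - p * y) = p * Rabs (x - y).
Proof.
  intros Hp. replace (p * x - p * y) with (p * (x - y)) by ring.
  rewrite Rabs_mult, Rabs_pos_eq; lra.
Qed.

Section KernelEstimates.

Variables (W : R -> R) (v : R).
Hypothesis W_moment : ImpInt0 (fun s => s * W s) v.
Hypothesis W_pos : forall s, 0 <= s -> 0 < W s.
Hypothesis W_antitone : forall s t, 0 <= s -> s <= t -> W t <= W s.

Local Notation U := (Wsh W).
Local Notation C := (Cw W v).

Lemma lsum_Wsh_shift_le a K : NoDup K -> lsum (fun k => U (Rabs (a - IZR k))) K <= 8 * C.
Proof.
  intros HK. pose proof (Cw_pos W v) as HC.
  apply Rle_trans with (lsum (fun k => C * / (1 + (a - IZR k) ^ 2)) K).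
  - apply lsum_le; intros k _. rewrite <- pow2_abs.
    apply (Wsh_le_lorentz W v W_moment W_pos W_antitone), Rabs_pos.
  - rewrite lsum_scal. pose proof (lsum_lorentz_shift_le a K HK). nra.
Qed.

(* One of the distances |a - k|, |b - k| is at least |a - b| / 2. *)
Lemma Wsh_mul_le a b k :
  U (Rabs (a - k)) * U (Rabs (b - k))
    <= U (Rabs (a - b) / 2) * (U (Rabs (a - k)) + U (Rabs (b - k))).
Proof.
  pose proof (Wsh_pos W W_pos (Rabs (a - k))). pose proof (Wsh_pos W W_pos (Rabs (b - k))).
  pose proof (Rabs_triang (a - k) (k - b)) as Htri.
  replace (a - k + (k - b)) with (a - b) in Htri by ring. rewrite (Rabs_minus_sym k b) in Htri.
  destruct (Rle_or_lt (Rabs (a - b) / 2) (Rabs (a - k))) as [Hp|Hp].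
  - pose proof (Wsh_antitone W W_antitone _ _ Hp).
    assert (U (Rabs (a - k)) * U (Rabs (b - k)) <= U (Rabs (a - b) / 2) * U (Rabs (b - k)))
      by (apply Rmult_le_compat_r; lra).
    nra.
  - assert (Hq : Rabs (a - b) / 2 <= Rabs (b - k)) by lra.
    pose proof (Wsh_antitone W W_antitone _ _ Hq).
    assert (U (Rabs (a - k)) * U (Rabs (b - k)) <= U (Rabs (a - k)) * U (Rabs (a - b) / 2))
      by (apply Rmult_le_compat_l; lra).
    nra.
Qed.

Lemma lsum_Wsh_pair_le a b K : NoDup K ->
  lsum (fun k => U (Rabs (a - IZR k)) * U (Rabs (b - IZR k))) K <= 16 * C * U (Rabs (a - b) / 2).
Proof.
  intros HK. eapply Rle_trans; [apply lsum_le; intros k _; apply Wsh_mul_le|].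
  rewrite lsum_scal, lsum_plus.
  pose proof (lsum_Wsh_shift_le a K HK). pose proof (lsum_Wsh_shift_le b K HK).
  pose proof (Wsh_pos W W_pos (Rabs (a - b) / 2)). nra.
Qed.

Variable psi : R -> Cx.
Hypothesis psi_bound : forall t, Cnorm (psi t) <= U (Rabs t).
Hypothesis psi_lipschitz : forall u w, Rabs (w - u) <= 1 ->
  Cnorm (Csub (psi w) (psi u)) <= 2 * U (Rabs u) * Rabs (w - u).

(* For |c - a| <= 1 use the Lipschitz bound, otherwise bound both terms separately. *)
Lemma lsum_psi_sub_le a b c K : NoDup K -> Rabs (a - b) / 2 <= Rabs (c - b) ->
  lsum (fun k => Cnorm (Csub (psi (c - IZR k)) (psi (a - IZR k))) * U (Rabs (b - IZR k))) K
    <= 32 * C * Rabs (c - a) * U (Rabs (a - b) / 4).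
Proof.
  intros HK Hcb. pose proof (Cw_pos W v) as HC.
  set (h := Rabs (c - a)). set (r := Rabs (a - b)). assert (0 <= h) by apply Rabs_pos.
  assert (Hr4 : U (r / 2) <= U (r / 4)).
  { apply (Wsh_antitone W W_antitone). unfold r. pose proof (Rabs_pos (a - b)). lra. }
  assert (0 < U (r / 4)) by apply (Wsh_pos W W_pos).
  destruct (Rle_or_lt h 1) as [Hh1|Hh1].
  - apply Rle_trans
      with (lsum (fun k => (2 * h) * (U (Rabs (a - IZR k)) * U (Rabs (b - IZR k)))) K).
    + apply lsum_le; intros k _.
      pose proof (psi_lipschitz (a - IZR k) (c - IZR k)) as Hq.
      replace (c - IZR k - (a - IZR k)) with (c - a) in Hq by ring. fold h in Hq.
      specialize (Hq Hh1).
      pose proof (Wsh_pos W W_pos (Rabs (b - IZR k))).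
      apply Rle_trans with (2 * U (Rabs (a - IZR k)) * h * U (Rabs (b - IZR k)));
        [apply Rmult_le_compat_r; lra | right; ring].
    + rewrite lsum_scal. pose proof (lsum_Wsh_pair_le a b K HK) as Hab. fold r in Hab.
      apply Rle_trans with (2 * h * (16 * C * U (r / 2))); [apply Rmult_le_compat_l; lra|].
      assert (0 <= h * C) by nra. nra.
  - apply Rle_trans with (lsum (fun k => U (Rabs (c - IZR k)) * U (Rabs (b - IZR k))
                                      + U (Rabs (a - IZR k)) * U (Rabs (b - IZR k))) K).
    + apply lsum_le; intros k _. rewrite <- Rmult_plus_distr_r.
      pose proof (Cnorm_sub_le (psi (c - IZR k)) (psi (a - IZR k))).
      pose proof (psi_bound (c - IZR k)). pose proof (psi_bound (a - IZR k)).
      pose proof (Wsh_pos W W_pos (Rabs (b - IZR k))). apply Rmult_le_compat_r; lra.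
    + rewrite lsum_plus.
      pose proof (lsum_Wsh_pair_le c b K HK).
      pose proof (lsum_Wsh_pair_le a b K HK) as Hab. fold r in Hab.
      assert (U (Rabs (c - b) / 2) <= U (r / 4))
        by (apply (Wsh_antitone W W_antitone); fold r in Hcb; lra).
      assert (0 <= C * U (r / 4)) by nra. nra.
Qed.

Variable eps : Z -> Z -> R.
Hypothesis eps_sign : sign_seq eps.

Lemma lsum_kernel_term_le x y : x <> y -> forall F, NoDup F ->
  lsum (fun i => Cnorm (kernel_term psi eps x y i)) F <= 128 * (C * C) / Rabs (x - y).
Proof.
  intros Hxy F HF. pose proof (Cw_pos W v) as HC.
  set (r := Rabs (x - y)). assert (Hr : 0 < r) by (apply Rabs_pos_lt; lra).
  apply (lsum_pairs_le Z.eq_dec Z.eq_dec _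
           (fun j => 16 * (C * C) * (powerRZ 2 j * / (1 + (powerRZ 2 j * (r / 2)) ^ 2)))); auto.
  - intros i; apply Cnorm_nonneg.
  - intros j K HK. pose proof (powerRZ2_pos j) as Hp. set (p := powerRZ 2 j) in *.
    rewrite (lsum_ext _ _ _ (fun k => Cnorm_kernel_term psi eps x y j k eps_sign)), lsum_scal.
    fold p.
    assert (Hk : lsum (fun k => Cnorm (psi (p * x - IZR k)) * Cnorm (psi (p * y - IZR k))) K
                 <= 16 * C * U (p * r / 2)).
    { unfold r. rewrite <- (Rabs_scale_sub p x y Hp).
      eapply Rle_trans; [| apply (lsum_Wsh_pair_le (p * x) (p * y) K HK)].
      apply lsum_le; intros k _. apply Rmult_le_compat; auto using Cnorm_nonneg. }
    assert (HU : U (p * r / 2) <= C / (1 + (p * (r / 2)) ^ 2)).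
    { replace (p * (r / 2)) with (p * r / 2) by field.
      apply (Wsh_le_lorentz W v W_moment W_pos W_antitone). nra. }
    apply Rle_trans with (p * (16 * C * (C / (1 + (p * (r / 2)) ^ 2)))).
    + apply Rmult_le_compat_l; [lra|]. eapply Rle_trans; [exact Hk|]. apply Rmult_le_compat_l; lra.
    + right. unfold Rdiv. ring.
  - intros J HJ. rewrite lsum_scal. pose proof (lsum_dyadic_lorentz_le (r / 2) J ltac:(lra) HJ).
    apply Rle_trans with (16 * (C * C) * (4 / (r / 2))); [apply Rmult_le_compat_l; nra|].
    right. field. lra.
Qed.

Lemma lsum_kernel_term_sub_le x y z : x <> y -> Rabs (z - x) <= Rabs (x - y) / 2 ->
  forall F, NoDup F ->
  lsum (fun i => Cnorm (Csub (kernel_term psi eps z y i) (kernel_term psi eps x y i))) F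
    <= 512 * (C * C) * Rabs (z - x) / Rabs (x - y) ^ 2.
Proof.
  intros Hxy Hzx F HF. pose proof (Cw_pos W v) as HC.
  set (r := Rabs (x - y)) in *. assert (Hr : 0 < r) by (apply Rabs_pos_lt; lra).
  set (h := Rabs (z - x)) in *. assert (Hh : 0 <= h) by apply Rabs_pos.
  assert (Hzy : r / 2 <= Rabs (z - y)).
  { pose proof (Rabs_triang (z - y) (x - z)) as Htri.
    replace (z - y + (x - z)) with (x - y) in Htri by ring.
    rewrite (Rabs_minus_sym x z) in Htri. fold r h in Htri. lra. }
  apply (lsum_pairs_le Z.eq_dec Z.eq_dec _
           (fun j => 32 * C * h * (powerRZ 2 j * powerRZ 2 j * U (powerRZ 2 j * (r / 4))))); auto.
  - intros i; apply Cnorm_nonneg.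
  - intros j K HK. pose proof (powerRZ2_pos j) as Hp. set (p := powerRZ 2 j) in *.
    rewrite (lsum_ext _ _ _ (fun k => Cnorm_kernel_term_sub psi eps x y z j k eps_sign)), lsum_scal.
    fold p.
    assert (Hk : lsum (fun k => Cnorm (Csub (psi (p * z - IZR k)) (psi (p * x - IZR k)))
                                * Cnorm (psi (p * y - IZR k))) K
                 <= 32 * C * (p * h) * U (p * r / 4)).
    { unfold h, r. rewrite <- (Rabs_scale_sub p z x Hp), <- (Rabs_scale_sub p x y Hp).
      eapply Rle_trans; [| apply (lsum_psi_sub_le (p * x) (p * y) (p * z) K HK)].
      - apply lsum_le; intros k _. apply Rmult_le_compat_l; auto using Cnorm_nonneg.
      - rewrite (Rabs_scale_sub p x y Hp), (Rabs_scale_sub p z y Hp). fold r.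
        replace (p * r / 2) with (p * (r / 2)) by field. apply Rmult_le_compat_l; lra. }
    apply Rle_trans with (p * (32 * C * (p * h) * U (p * r / 4))); [apply Rmult_le_compat_l; lra|].
    right. replace (p * (r / 4)) with (p * r / 4) by field. ring.
  - intros J HJ. rewrite lsum_scal.
    pose proof (lsum_dyadic_Wsh_le W v W_moment W_pos W_antitone (r / 4) J ltac:(lra) HJ).
    apply Rle_trans with (32 * C * h * (C / (r / 4 * (r / 4)))); [apply Rmult_le_compat_l; nra|].
    right. field. lra.
Qed.

End KernelEstimates.

Theorem theorem2p5 :
  forall W : R -> R,
    (exists v, ImpInt0 (fun s => s * W s) v) ->
    exists C1 C2 C3 : R, 0 < C1 /\ 0 < C2 /\ 0 < C3 /\
    forall (psi dpsi : R -> Cx),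
      orthonormal_wavelet psi ->
      (forall x, derivable_pt_lim (fun t => Cre (psi t)) x (Cre (dpsi x))) ->
      (forall x, derivable_pt_lim (fun t => Cim (psi t)) x (Cim (dpsi x))) ->
      radial_decr_L1_majorant W psi ->
      radial_decr_L1_majorant W dpsi ->
      forall eps : Z -> Z -> R, sign_seq eps ->
        (forall x y, x <> y -> HasSumC (kernel_term psi eps x y) (Kern psi eps x y)) /\
        (forall x y, x <> y -> Cnorm (Kern psi eps x y) <= C1 / Rabs (x - y)) /\
        (forall x y z, x <> y -> Rabs (z - x) <= Rabs (x - y) / 2 ->
           Cnorm (Csub (Kern psi eps z y) (Kern psi eps x y))
             <= C2 * Rabs (z - x) / Rabs (x - y) ^ 2) /\
        (forall x y w, x <> y -> Rabs (w - y) <= Rabs (x - y) / 2 ->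
           Cnorm (Csub (Kern psi eps x w) (Kern psi eps x y))
             <= C3 * Rabs (w - y) / Rabs (x - y) ^ 2).
Proof.
  intros W [v Hmom].
  set (C := Cw W v). assert (HC : 0 < C) by apply Cw_pos.
  exists (128 * (C * C)), (512 * (C * C)), (512 * (C * C)).
  split; [nra | split; [nra | split; [nra|]]].
  intros psi dpsi _ Hre Him Hpsi Hdpsi eps Heps.
  pose proof Hpsi as [Wpos [Wanti _]].
  assert (Hbound : forall t, Cnorm (psi t) <= Wsh W (Rabs t)).
  { intros t. eapply Rle_trans; [| apply (W_le_Wsh W Wanti), Rabs_pos].
    exact (Cnorm_le_majorant W psi (Ccontinuous_of_derivable psi dpsi Hre Him) Hpsi t). }
  pose proof (Cnorm_sub_le_derivative_majorant W psi dpsi Hre Him Hdpsi) as Hlip.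
  pose proof (lsum_kernel_term_le W v Hmom Wpos Wanti psi Hbound eps Heps) as Habs.
  pose proof (lsum_kernel_term_sub_le W v Hmom Wpos Wanti psi Hbound Hlip eps Heps) as Hdiff.
  assert (Hsum : forall x y, x <> y -> HasSumC (kernel_term psi eps x y) (Kern psi eps x y)).
  { intros x y Hxy. unfold Kern.
    apply epsilon_spec, (HasSumC_bounded _ (128 * (C * C) / Rabs (x - y))).
    exact (Habs x y Hxy). }
  assert (Hfar : forall x y z, x <> y -> Rabs (z - x) <= Rabs (x - y) / 2 -> z <> y).
  { intros x y z Hxy Hzx ->. pose proof (Rabs_pos_lt (x - y) ltac:(lra)).
    rewrite Rabs_minus_sym in Hzx. lra. }
  split; [exact Hsum | split; [| split]].
  - intros x y Hxy. exact (HasSumC_norm_le _ _ _ (Hsum x y Hxy) (Habs x y Hxy)).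
  - intros x y z Hxy Hzx.
    exact (HasSumC_norm_le _ _ _
             (HasSumC_sub _ _ _ _ (Hsum z y (Hfar x y z Hxy Hzx)) (Hsum x y Hxy))
             (Hdiff x y z Hxy Hzx)).
  - intros x y w Hxy Hwy. rewrite (Rabs_minus_sym x y) in *.
    pose proof (not_eq_sym (Hfar y x w (not_eq_sym Hxy) Hwy)) as Hxw.
    apply (HasSumC_norm_le _ _ _ (HasSumC_sub _ _ _ _ (Hsum x w Hxw) (Hsum x y Hxy))).
    intros F HF. rewrite (lsum_ext _ _ _ (Cnorm_kernel_term_sub_swap psi eps x y w)).
    exact (Hdiff y x w (not_eq_sym Hxy) Hwy F HF).
Qed.
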